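(* Let $k\ge 1$ and let $S_a,S_b\in\{0,1\}^{k^2}$. Let $G$ be the directed weighted graph on the $6k+1$ vertices $\ell_i,\ell_i',r_i,r_i',\overline{\ell}_i$ ($1\le i\le k$) and $p_0,\dots,p_k$ with the following edges: for each $1\le i\le k$, the edges $(\ell_i,r_i)$ and $(r_i',\ell_i')$ of weight $k$, the edge $(p_{i-1},p_i)$ of weight $1$, the edge $(p_{i-1},\ell_i)$ of weight $4k(k-i+1)$, and the edge $(\overline{\ell}_i,p_i)$ of weight $4ki$; for each $1\le i,j\le k$, the edge $(\ell_j',\overline{\ell}_i)$ of weight $k$ if $S_a[(i-1)k+j]=1$, and the edge $(r_i,r_j')$ of weight $k$ if $S_b[(i-1)k+j]=1$. Then $\Pi=\langle p_0,p_1,\dots,p_k\rangle$ is a shortest $p_0$-$p_k$ path in $G$, and: (i) if there is an index $m$ with $S_a[m]=S_b[m]=1$, the weight of a second simple shortest path from $p_0$ to $p_k$ (with respect to $\Pi$) is at most $4k^2+9k-1$; (ii) if there is no such index, every simple $p_0$-$p_k$ path that avoids at least one edge of $\Pi$ has weight at least $4k^2+12k$.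
   Context: Given a graph, vertices $s,t$ and a shortest $s$-$t$ path $P_{st}$, a second simple shortest path is a minimum-weight simple $s$-$t$ path that does not contain at least one edge of $P_{st}$. For a bit string $S$, $S[m]$ denotes its $m$-th bit. *)

From HB Require Import structures.
From mathcomp Require Import all_boot.
Set Implicit Arguments. Unset Strict Implicit. Unset Printing Implicit Defensive.

(** * Generic directed weighted graphs, given by a partial weight function:
    [w u v = Some c] iff there is an edge (u,v), of weight c. *)
Section Graphs.
Variable V : eqType.
Variable w : V -> V -> option nat.

(** A path (walk) from [x] is [x :: s]; consecutive vertices are joined by edges. *)
Definition is_walk (x : V) (s : seq V) : bool :=
  path (fun u v => w u v != None) x s.

Definition is_st_walk (s0 t0 x : V) (s : seq V) : bool :=
  [&& x == s0, last x s == t0 & is_walk x s].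

Definition is_simple_st_path (s0 t0 x : V) (s : seq V) : bool :=
  is_st_walk s0 t0 x s && uniq (x :: s).

Definition walk_weight (x : V) (s : seq V) : nat :=
  sumn (pairmap (fun u v => odflt 0 (w u v)) x s).

Definition walk_edges (x : V) (s : seq V) : seq (V * V) := zip (x :: s) s.

Definition is_shortest_path (s0 t0 x : V) (s : seq V) : Prop :=
  is_st_walk s0 t0 x s /\
  forall y q, is_st_walk s0 t0 y q -> walk_weight x s <= walk_weight y q.

Definition avoids_some_edge (px : V) (ps : seq V) (x : V) (s : seq V) : bool :=
  has (fun e => e \notin walk_edges x s) (walk_edges px ps).

Definition is_simple_replacement (s0 t0 px : V) (ps : seq V) (x : V) (s : seq V) :=
  is_simple_st_path s0 t0 x s && avoids_some_edge px ps x s.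

Definition is_second_simple_shortest_path (s0 t0 px : V) (ps : seq V)
    (x : V) (s : seq V) : Prop :=
  is_simple_replacement s0 t0 px ps x s /\
  forall y q, is_simple_replacement s0 t0 px ps y q ->
    walk_weight x s <= walk_weight y q.
End Graphs.

Inductive vtx :=
| Lv of nat
| Lv' of nat
| Rv of nat
| Rv' of nat
| Lb of nat
| Pv of nat.

Definition vtx_code (x : vtx) : nat * nat :=
  match x with
  | Lv i => (0, i) | Lv' i => (1, i) | Rv i => (2, i)
  | Rv' i => (3, i) | Lb i => (4, i) | Pv i => (5, i)
  end.
Definition vtx_decode (c : nat * nat) : vtx :=
  match c with
  | (0, i) => Lv i | (1, i) => Lv' i | (2, i) => Rv i
  | (3, i) => Rv' i | (4, i) => Lb i | (_, i) => Pv i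
  end.
Lemma vtx_codeK : cancel vtx_code vtx_decode.
Proof. by case. Qed.
HB.instance Definition _ := Equality.copy vtx (can_type vtx_codeK).

(** bit m (1-indexed) of a bit string of length n: S[m] *)
Definition bit (n : nat) (S : n.-tuple bool) (m : nat) : bool := nth false S m.-1.

Definition inr1 (k i : nat) : bool := (1 <= i <= k).

Definition Gw (k : nat) (Sa Sb : (k ^ 2).-tuple bool) (u v : vtx) : option nat :=
  match u, v with
  | Lv i, Rv j => if (i == j) && inr1 k i then Some k else None
  | Rv' i, Lv' j => if (i == j) && inr1 k i then Some k else None
  | Pv a, Pv b => if (b == a.+1) && inr1 k b then Some 1 else None
  | Pv a, Lv i => if (i == a.+1) && inr1 k i then Some (4 * k * (k - i + 1)) else None
  | Lb i, Pv j => if (i == j) && inr1 k i then Some (4 * k * i) else None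
  | Lv' j, Lb i =>
      if [&& inr1 k i, inr1 k j & bit Sa ((i - 1) * k + j)] then Some k else None
  | Rv i, Rv' j =>
      if [&& inr1 k i, inr1 k j & bit Sb ((i - 1) * k + j)] then Some k else None
  | _, _ => None
  end.

(** Pi = <p_0, p_1, ..., p_k>, written as head p_0 and tail [p_1; ...; p_k] *)
Definition Pi_tail (k : nat) : seq vtx := [seq Pv i | i <- iota 1 k].

From mathcomp Require Import all_boot zify.
From Stdlib Require Import Classical Wf_nat.
Set Implicit Arguments. Unset Strict Implicit. Unset Printing Implicit Defensive.

(* With the potential p_i |-> i no edge gains more potential than its weight,
   so Pi, of weight k, is shortest.  A walk leaving Pi at p_a is forced along
   p_a, l_(a+1), r_(a+1), r'_j, l'_j, lb_i, p_i, which exists iff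
   S_b[a k + j] = S_a[(i-1) k + j] = 1 and weighs 4k(k - a + i) + 4k.  A common
   index a k + j gives such a detour with i = a + 1, hence a replacement path of
   weight 4k^2 + 9k - 1.  Without one, a simple path must return to Pi at some
   i >= a + 2, which already costs 4k(k + 2) + 4k. *)

Section WalkTheory.
Variables (V : eqType) (w : V -> V -> option nat).

Lemma walk_weight_cons x y s :
  walk_weight w x (y :: s) = odflt 0 (w x y) + walk_weight w y s.
Proof. by []. Qed.

Lemma walk_weight_cat x s1 s2 :
  walk_weight w x (s1 ++ s2) = walk_weight w x s1 + walk_weight w (last x s1) s2.
Proof. by rewrite /walk_weight pairmap_cat sumn_cat. Qed.

Lemma walk_edges_cat (x : V) s1 s2 :
  walk_edges x (s1 ++ s2) = walk_edges x s1 ++ walk_edges (last x s1) s2.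
Proof. by elim: s1 x => [|y s1 IH] x //=; congr (_ :: _); apply: IH. Qed.

Lemma is_walk_cat x s1 s2 :
  is_walk w x (s1 ++ s2) = is_walk w x s1 && is_walk w (last x s1) s2.
Proof. exact: cat_path. Qed.

Lemma walk_potential_bound (f : V -> nat) x s :
  (forall u v c, w u v = Some c -> f v <= f u + c) ->
  is_walk w x s -> f (last x s) <= f x + walk_weight w x s.
Proof.
move=> f_pot; elim: s x => [|y s IH] x /=; first by rewrite addn0.
move=> /andP[]; case wxy: (w x y) => [c|] // _ /IH le_y.
by rewrite walk_weight_cons wxy addnA (leq_trans le_y) // leq_add2r (f_pot _ _ _ wxy).
Qed.

Lemma exists_second_simple_shortest_path s0 t0 px ps x s :
  is_simple_replacement w s0 t0 px ps x s ->
  exists y q, is_second_simple_shortest_path w s0 t0 px ps y q /\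
              walk_weight w y q <= walk_weight w x s.
Proof.
move=> repl_xs.
pose P n := exists y q, is_simple_replacement w s0 t0 px ps y q /\ walk_weight w y q = n.
have [|n [[[y [q [repl_yq <-]]] min_n] _]] :=
  @dec_inh_nat_subset_has_unique_least_element P (fun n => classic (P n)).
  by exists (walk_weight w x s), x, s.
have min_yq y' q' : is_simple_replacement w s0 t0 px ps y' q' ->
    walk_weight w y q <= walk_weight w y' q'.
  by move=> repl'; apply/leP/min_n; exists y', q'.
by exists y, q; split; [split|apply: min_yq].
Qed.

End WalkTheory.

Lemma square_index_split (k : nat) (P : pred nat) :
  (exists m, (1 <= m <= k ^ 2) && P m) <->
  (exists a j, [/\ a < k, 1 <= j <= k & P (a * k + j)]).
Proof.
split=> [[m /andP[/andP[m_gt0 m_le] Pm]] | [a [j [a_lt /andP[j_gt0 j_le] Pm]]]].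
- have k_gt0 : 0 < k by case: k m_le {Pm} => //; rewrite expnS mul0n; lia.
  exists ((m - 1) %/ k), ((m - 1) %% k).+1; split; last 2 first.
  + by rewrite ltn_pmod.
  + by rewrite addnS -divn_eq subn1 prednK.
  by rewrite ltn_divLR //; move: m_le; rewrite -mulnn; lia.
- exists (a * k + j); rewrite Pm andbT; apply/andP; split; first lia.
  have : a.+1 * k <= k * k by rewrite leq_mul2r a_lt orbT.
  by rewrite -mulnn mulSn; lia.
Qed.

Section Construction.
Variables (k : nat) (Sa Sb : (k ^ 2).-tuple bool).
Notation G := (Gw Sa Sb).

Definition shared_bit : Prop := exists m, [&& 1 <= m <= k ^ 2, bit Sa m & bit Sb m].

Lemma shared_bitP :
  shared_bit <->
  exists a j, [/\ a < k, 1 <= j <= k & bit Sa (a * k + j) && bit Sb (a * k + j)].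
Proof. exact: (square_index_split k (fun m => bit Sa m && bit Sb m)). Qed.

Definition pi_segment (a n : nat) : seq vtx := [seq Pv i | i <- iota a.+1 n].

Lemma pi_segment_walk a n : a + n <= k -> is_walk G (Pv a) (pi_segment a n).
Proof.
elim: n a => [|n IH] a le_k //=.
by rewrite eqxx /inr1 /= ifT ?IH //; lia.
Qed.

Lemma pi_segment_last a n : last (Pv a) (pi_segment a n) = Pv (a + n).
Proof. by elim: n a => [|n IH] a /=; rewrite ?addn0 ?IH ?addSnnS. Qed.

Lemma pi_segment_weight a n : a + n <= k -> walk_weight G (Pv a) (pi_segment a n) = n.
Proof.
elim: n a => [|n IH] a le_k //=.
by rewrite walk_weight_cons IH /= ?eqxx /inr1 /= ?ifT //; lia.
Qed.

Lemma pi_segment_edges a n :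
  walk_edges (Pv a) (pi_segment a n) = [seq (Pv t, Pv t.+1) | t <- iota a n].
Proof. by elim: n a => [|n IH] a //=; congr (_ :: _); apply: IH. Qed.

Lemma mem_pi_segment_edges a n t :
  ((Pv t, Pv t.+1) \in walk_edges (Pv a) (pi_segment a n)) = (a <= t < a + n).
Proof.
rewrite pi_segment_edges (mem_map (f := fun t => (Pv t, Pv t.+1))) ?mem_iota //.
by move=> t1 t2 [].
Qed.

Definition pv_index (v : vtx) : nat := if v is Pv i then i else 0.

Lemma Gw_potential_pv_index u v c : G u v = Some c -> pv_index v <= pv_index u + c.
Proof.
case: u => a; case: v => b //=; case: ifP => // /andP[/eqP -> /andP[? ?]] [<-] /=; nia.
Qed.

Lemma pi_shortest_path : is_shortest_path G (Pv 0) (Pv k) (Pv 0) (Pi_tail k).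
Proof.
have pi_last : last (Pv 0) (Pi_tail k) = Pv k by apply: pi_segment_last.
split=> [|y q /and3P[/eqP -> /eqP q_last q_walk]].
  by rewrite /is_st_walk pi_last !eqxx pi_segment_walk.
have := walk_potential_bound Gw_potential_pv_index q_walk.
by rewrite q_last (pi_segment_weight (a := 0)).
Qed.

Lemma Gw_out_Pv a y : G (Pv a) y != None -> y = Pv a.+1 \/ y = Lv a.+1.
Proof. by case: y => //= i; case: ifP => // /andP[/eqP -> _]; [right | left]. Qed.

Lemma Gw_out_Lv i y : G (Lv i) y != None -> y = Rv i.
Proof. by case: y => //= j; case: ifP => // /andP[/eqP ->]. Qed.

Lemma Gw_out_Rv i y : G (Rv i) y != None -> exists j, y = Rv' j.
Proof. by case: y => //= j; exists j. Qed.

Lemma Gw_out_Rv' j y : G (Rv' j) y != None -> y = Lv' j.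
Proof. by case: y => //= i; case: ifP => // /andP[/eqP ->]. Qed.

Lemma Gw_out_Lv' j y : G (Lv' j) y != None -> exists i, y = Lb i.
Proof. by case: y => //= i; exists i. Qed.

Lemma Gw_out_Lb i y : G (Lb i) y != None -> y = Pv i.
Proof. by case: y => //= j; case: ifP => // /andP[/eqP ->]. Qed.

Definition detour (a j i : nat) : seq vtx :=
  [:: Lv a.+1; Rv a.+1; Rv' j; Lv' j; Lb i; Pv i].

Lemma detour_walk a j i :
  is_walk G (Pv a) (detour a j i) =
  [&& a < k, 1 <= j <= k, 1 <= i <= k, bit Sb (a * k + j) & bit Sa ((i - 1) * k + j)].
Proof.
have if_some b (c : nat) : ((if b then Some c else None) != None) = b by case: b.
rewrite /is_walk /= !eqxx /inr1 !if_some subSS subn0.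
by case: (a < k); case: (0 < j <= k); case: (0 < i <= k);
  case: (bit Sb _); case: (bit Sa _).
Qed.

Lemma detour_weight a j i :
  is_walk G (Pv a) (detour a j i) ->
  walk_weight G (Pv a) (detour a j i) = 4 * k * (k - a + i) + 4 * k.
Proof.
rewrite detour_walk => /and5P[a_lt j_range i_range bit_b bit_a].
rewrite /walk_weight /= !eqxx /inr1 subSS subn0 /= a_lt j_range i_range bit_b bit_a /=.
nia.
Qed.

Lemma walk_off_pi a b y s :
  y != Pv a.+1 -> is_walk G (Pv a) (y :: s) -> last y s = Pv b ->
  exists j i s', y :: s = detour a j i ++ s'.
Proof.
move=> ne_y /andP[/Gw_out_Pv[E|->]]; first by rewrite E eqxx in ne_y.
case: s => [|y2 s] //= /andP[/Gw_out_Lv ->].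
case: s => [|y3 s] //= /andP[/Gw_out_Rv [j ->]].
case: s => [|y4 s] //= /andP[/Gw_out_Rv' ->].
case: s => [|y5 s] //= /andP[/Gw_out_Lv' [i ->]].
case: s => [|y6 s] //= /andP[/Gw_out_Lb ->] _ _.
by exists j, i, s.
Qed.

Lemma detour_heavy a j i :
  ~ shared_bit -> is_walk G (Pv a) (detour a j i) -> a < i ->
  4 * k ^ 2 + 12 * k <= walk_weight G (Pv a) (detour a j i).
Proof.
move=> no_shared walk_d a_lt_i; rewrite detour_weight //.
move: walk_d; rewrite detour_walk => /and5P[a_lt j_range _ bit_b bit_a].
have i_ne_Sa : i != a.+1.
  apply: contra_notN no_shared => /eqP i_eq; apply/shared_bitP; exists a, j.
  by move: bit_a; rewrite i_eq subSS subn0 => ->; rewrite bit_b.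
nia.
Qed.

Lemma simple_walk_on_pi_or_heavy a s :
  ~ shared_bit ->
  is_walk G (Pv a) s -> last (Pv a) s = Pv k -> uniq (Pv a :: s) ->
  (forall b, Pv b \in s -> a <= b) ->
  s = pi_segment a (k - a) \/ 4 * k ^ 2 + 12 * k <= walk_weight G (Pv a) s.
Proof.
move=> no_shared; elim: s a => [|y s IH] a walk_ys last_ys uniq_ys after_a.
  by left; case: last_ys => ->; rewrite subnn.
have [y_eq | ne_y] := eqVneq y (Pv a.+1); case/andP: uniq_ys => a_notin uniq_ys.
  subst y; case/andP: walk_ys; rewrite /= eqxx /inr1 /=; case: ifP => // a_lt _ walk_s.
  have after_Sa b : Pv b \in s -> a.+1 <= b.
    move=> b_in; rewrite ltn_neqAle after_a ?inE ?b_in ?orbT // andbT.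
    by apply: contraNneq a_notin => ->; rewrite inE b_in orbT.
  case: (IH a.+1) => // [-> | heavy]; last by right; rewrite walk_weight_cons; lia.
  by left; rewrite -(subnSK a_lt).
have [j [i [s' ys_eq]]] := walk_off_pi ne_y walk_ys last_ys.
rewrite ys_eq in walk_ys a_notin after_a *; right.
have walk_d : is_walk G (Pv a) (detour a j i).
  by move: walk_ys; rewrite is_walk_cat => /andP[].
have a_lt_i : a < i.
  rewrite ltn_neqAle after_a ?andbT; last by rewrite !inE eqxx !orbT.
  by apply: contraNneq a_notin => ->; rewrite !inE eqxx !orbT.
by rewrite walk_weight_cat (leq_trans (detour_heavy no_shared walk_d a_lt_i)) ?leq_addr.
Qed.

Definition pi_detour_path (a j : nat) : seq vtx :=
  pi_segment 0 a ++ detour a j a.+1 ++ pi_segment a.+1 (k - a.+1).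

Section PiDetourPath.
Variables a j : nat.
Hypothesis walk_d : is_walk G (Pv a) (detour a j a.+1).

Let a_lt_k : a < k.
Proof. by move: walk_d; rewrite detour_walk => /andP[]. Qed.

Let pi_segment_0a_last : last (Pv 0) (pi_segment 0 a) = Pv a.
Proof. exact: pi_segment_last. Qed.

Lemma pi_detour_path_weight :
  walk_weight G (Pv 0) (pi_detour_path a j) = 4 * k ^ 2 + 9 * k - 1.
Proof.
rewrite /pi_detour_path !walk_weight_cat pi_segment_0a_last detour_weight //=.
by rewrite !pi_segment_weight; [nia | lia..].
Qed.

Lemma pi_detour_path_replacement :
  is_simple_replacement G (Pv 0) (Pv k) (Pv 0) (Pi_tail k) (Pv 0) (pi_detour_path a j).
Proof.
apply/andP; split; [apply/andP; split; [apply/and3P; split => // |] |].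
- by rewrite !last_cat pi_segment_0a_last /= pi_segment_last subnKC.
- rewrite /pi_detour_path !is_walk_cat pi_segment_0a_last walk_d /=.
  by rewrite !pi_segment_walk //; lia.
- pose rank v := match v with
    | Pv t => 6 * t | Lv t => 6 * t - 5 | Rv t => 6 * t - 4
    | Rv' _ => 6 * a + 3 | Lv' _ => 6 * a + 4 | Lb _ => 6 * a + 5 end.
  have rank_pi_segment b n : path (relpre rank ltn) (Pv b) (pi_segment b n).
    by elim: n b => [|n IH] b //=; rewrite IH andbT; lia.
  apply: (map_uniq (f := rank)); apply: (sorted_uniq ltn_trans ltnn).
  rewrite sorted_map /= /pi_detour_path !cat_path !rank_pi_segment pi_segment_0a_last /=.
  by rewrite andbT; lia.
- rewrite /avoids_some_edge; apply/hasP; exists (Pv a, Pv a.+1).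
    by rewrite mem_pi_segment_edges.
  rewrite /pi_detour_path !walk_edges_cat pi_segment_0a_last !mem_cat !mem_pi_segment_edges.
  by rewrite ltnn andbF /= orbF !inE !xpair_eqE /= ?andbF.
Qed.

End PiDetourPath.

End Construction.

Theorem mainTheorem1 (k : nat) (Sa Sb : (k ^ 2).-tuple bool) :
  1 <= k ->
  is_shortest_path (Gw Sa Sb) (Pv 0) (Pv k) (Pv 0) (Pi_tail k) /\
  ((exists m, [&& 1 <= m <= k ^ 2, bit Sa m & bit Sb m]) ->
     exists x s,
       is_second_simple_shortest_path (Gw Sa Sb) (Pv 0) (Pv k) (Pv 0) (Pi_tail k) x s
       /\ walk_weight (Gw Sa Sb) x s <= 4 * k ^ 2 + 9 * k - 1) /\
  (~ (exists m, [&& 1 <= m <= k ^ 2, bit Sa m & bit Sb m]) ->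
     forall x s,
       is_simple_replacement (Gw Sa Sb) (Pv 0) (Pv k) (Pv 0) (Pi_tail k) x s ->
       4 * k ^ 2 + 12 * k <= walk_weight (Gw Sa Sb) x s).
Proof.
(* The construction needs no lower bound on k. *)
move=> _; split; [exact: pi_shortest_path | split].
- move=> /shared_bitP [a [j [a_lt j_range /andP[bit_a bit_b]]]].
  have walk_d : is_walk (Gw Sa Sb) (Pv a) (detour a j a.+1).
    by rewrite detour_walk subSS subn0 a_lt j_range bit_a bit_b.
  have [y [q [second le_q]]] :=
    exists_second_simple_shortest_path (pi_detour_path_replacement walk_d).
  by exists y, q; rewrite -(pi_detour_path_weight walk_d).
- move=> no_shared x s /andP[/andP[/and3P[/eqP -> /eqP s_last s_walk] s_uniq] avoids].
  have [s_eq | //] :=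
    simple_walk_on_pi_or_heavy no_shared s_walk s_last s_uniq (fun b _ => leq0n b).
  by move: avoids; rewrite s_eq subn0 => /hasP[e e_in]; rewrite e_in.
Qed.
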